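(* Let $A$ be a ${}^\lambda\mathrm{H}_t(m,n;s,k)$ which is simple with respect to a choice of simple orderings of its rows and of its columns. Then (1) there exists a cyclic $s$-cycle decomposition of ${}^\lambda K_{(\frac{2ms}{\lambda t}+1)\times t}$, and (2) there exists a cyclic $k$-cycle decomposition of ${}^\lambda K_{(\frac{2nk}{\lambda t}+1)\times t}$.
   Context: Let $m,n,s,k,\lambda,t$ be positive integers with $t$ dividing $\frac{2nk}{\lambda}$, let $v=\frac{2nk}{\lambda}+t$ and let $J$ be the subgroup of $\mathbb{Z}_v$ of order $t$. A ${}^\lambda\mathrm{H}_t(m,n;s,k)$ is an $m\times n$ partially filled array with entries in $\mathbb{Z}_v$ such that: (a) each row has exactly $s$ and each column exactly $k$ filled cells; (b) the multiset $\{\pm x: x$ an entry of a filled cell$\}$ contains each element of $\mathbb{Z}_v\setminus J$ exactly $\lambda$ times and no element of $J$; (c) every row and column sums to $0$ in $\mathbb{Z}_v$. An ordering of a row/column (list of entries along a cyclic permutation of its filled cells) is simple if its partial sums are pairwise distinct; the array is simple if each row and column admits a simple ordering. $K_{q\times r}$ is the complete multipartite graph with $q$ parts of size $r$ and ${}^\lambda\Gamma$ is the multigraph obtained from $\Gamma$ by repeating each edge $\lambda$ times. A cyclic $\ell$-cycle decomposition of a multigraph with vertex set identified with $\mathbb{Z}_N$ is a set of $\ell$-cycles whose edge multisets partition the edge multiset, and which is closed under translation by every element of $\mathbb{Z}_N$. *)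

From HB Require Import structures.
From mathcomp Require Import all_boot all_order all_algebra all_fingroup.
Set Implicit Arguments. Unset Strict Implicit. Unset Printing Implicit Defensive.
Import GRing.Theory.
Local Open Scope ring_scope.

Definition Hv (n k lambda t : nat) : nat := ((2 * n * k) %/ lambda + t)%N.

(* The subgroup of Z_v of order t (t | v): the multiples of v/t. *)
Definition Jsub (v t : nat) : {set 'Z_v} := [set x : 'Z_v | ((v %/ t) %| (x : nat))%N].

Section Arrays.
Variables (v m n : nat).
Implicit Type A : 'M[option 'Z_v]_(m, n).

Definition entry (x : option 'Z_v) : 'Z_v := odflt 0 x.

Definition filled_row A (i : 'I_m) : {set 'I_n} := [set j | A i j != None].
Definition filled_col A (j : 'I_n) : {set 'I_m} := [set i | A i j != None].

Definition simple_row_ordering A (i : 'I_m) (c : seq 'I_n) : bool :=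
  perm_eq c (enum (filled_row A i)) &&
  uniq [seq \sum_(j <- take h c) entry (A i j) | h <- iota 1 (size c)].

Definition simple_col_ordering A (j : 'I_n) (c : seq 'I_m) : bool :=
  perm_eq c (enum (filled_col A j)) &&
  uniq [seq \sum_(i <- take h c) entry (A i j) | h <- iota 1 (size c)].

Definition is_simple A : Prop :=
  (forall i, exists c, simple_row_ordering A i c) /\
  (forall j, exists c, simple_col_ordering A j c).
End Arrays.

Definition is_H (m n s k lambda t : nat)
    (A : 'M[option 'Z_(Hv n k lambda t)]_(m, n)) : Prop :=
  [/\ forall i, #|filled_row A i| = s,
      forall j, #|filled_col A j| = k,
      forall y : 'Z_(Hv n k lambda t),
        (\sum_(i < m) \sum_(j < n)
            ((A i j == Some y) + (A i j == Some (- y)))%N)%N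
        = (if y \in @Jsub (Hv n k lambda t) t then 0 else lambda)%N,
      forall i, \sum_(j < n) entry (A i j) = 0
    & forall j, \sum_(i < m) entry (A i j) = 0].

(* Cycles on Z_N: a sequence of distinct vertices; its edges are the
   cyclically consecutive pairs. Number of times c uses edge {a,b}: *)
Definition cyc_edge_count (N : nat) (c : seq 'Z_N) (a b : 'Z_N) : nat :=
  \sum_(i < size c)
     ((((nth (0%R : 'Z_N) c i, nth (0%R : 'Z_N) c ((i.+1 %% size c)%N)) == (a, b)) ||
       ((nth (0%R : 'Z_N) c i, nth (0%R : 'Z_N) c ((i.+1 %% size c)%N)) == (b, a))) : nat).

Definition cyc_equiv (N : nat) (c c' : seq 'Z_N) : Prop :=
  exists r, c' = rot r c \/ c' = rot r (rev c).

(* Edge multiplicity of ^lambda K_{q x r} on vertex set Z_{qr}, whose parts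
   are the cosets of the subgroup of order r (the multiples of q). *)
Definition Kmult (q r lambda : nat) (a b : 'Z_(q * r)) : nat :=
  if (q %| nat_of_ord ((a - b)%R : 'Z_(q * r)))%N then 0 else lambda.

(* A cyclic l-cycle decomposition of ^lambda K_{q x r}: a (multi)family of
   l-cycles whose edges partition the edge multiset, closed under translation. *)
Definition cyclic_cycle_decomp (q r lambda l : nat) : Prop :=
  exists (M : nat) (D : 'I_M -> seq 'Z_(q * r)),
    [/\ forall i, size (D i) = l /\ uniq (D i),
        forall a b : 'Z_(q * r),
          (\sum_(i < M) cyc_edge_count (D i) a b)%N = @Kmult q r lambda a b
      & forall g : 'Z_(q * r), exists sigma : {perm 'I_M},
          forall i, cyc_equiv (D (sigma i)) (map (fun x => x + g) (D i))].

Arguments is_H : clear implicits.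
Arguments cyclic_cycle_decomp : clear implicits.

From HB Require Import structures.
From mathcomp Require Import all_boot all_order all_algebra all_fingroup.
From mathcomp Require Import ring.
Set Implicit Arguments. Unset Strict Implicit. Unset Printing Implicit Defensive.
Import GRing.Theory.
Local Open Scope ring_scope.

(* Let A be a simple
   Heffter array over Z_v, v = qt.  For a row with simple ordering
   (d_1, ..., d_s), the partial sums d_1, d_1 + d_2, ..., d_1 + ... + d_s are
   pairwise distinct, so they form an s-cycle of Z_v; since the row sums to 0,
   the steps of this cycle are again d_1, ..., d_s (rotated).  Among all
   translates of a cycle, an edge {a, b} is used once for every step equal to
   +-(a - b).  Hence the translates of all row cycles form a translation-closed
   family using every edge {a, b} exactly lambda times when a - b lies outside
   the subgroup J of multiples of q, and never otherwise: a cyclic s-cycle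
   decomposition of ^lambda K_{q x t}. *)

Lemma count_sum (T : Type) (a : pred T) (s : seq T) :
  count a s = (\sum_(x <- s) a x)%N.
Proof. by rewrite -sum1_count big_mkcond. Qed.

Lemma nth_rot1 (T : Type) (x0 : T) (s : seq T) (h : nat) : (h < size s)%N ->
  nth x0 (rot 1 s) h = nth x0 s (h.+1 %% size s).
Proof.
case: s => [//|x s] /=; rewrite rot1_cons nth_rcons ltnS leq_eqVlt.
by case/orP=> [/eqP ->|hs]; rewrite ?modnn ?ltnn ?eqxx // modn_small ?hs.
Qed.

Section CycleDifferences.
Variable N : nat.
Implicit Types (c d : seq 'Z_N) (x y a b g : 'Z_N).

Definition cyc_diff c : seq 'Z_N :=
  [seq nth 0 c (h.+1 %% size c) - nth 0 c h | h <- iota 0 (size c)].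

(* Exactly one translate of the directed pair (x, y) starts at a, and it ends
   at b iff y - x = b - a. *)
Lemma translates_of_pair x y a b :
  (\sum_(g : 'Z_N) (((x + g, y + g) == (a, b))%R : nat))%N = (y - x == b - a).
Proof.
have pairE g : ((x + g, y + g) == (a, b)) = (g == a - x) && (y - x == b - a).
  rewrite xpair_eqE; apply/andP/andP => -[/eqP H1 /eqP H2]; split; apply/eqP.
  - by rewrite -H1; ring.
  - by rewrite -H1 -H2; ring.
  - by rewrite H1; ring.
  - by rewrite H1 -[b](subrK a) -H2; ring.
under eq_bigr do rewrite pairE.
by rewrite (bigD1 (a - x)) //= eqxx big1 ?addn0 // => g /negbTE ->.
Qed.

Lemma translates_of_edge x y a b : y - x != 0 ->
  (\sum_(g : 'Z_N)
     ((((x + g, y + g) == (a, b)) || ((x + g, y + g) == (b, a)))%R : nat))%N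
    = ((y - x == b - a)%R + (y - x == a - b)%R)%N.
Proof.
move=> yx_nz; rewrite -!translates_of_pair -big_split /=; apply: eq_bigr => g _.
case: eqP => [[xa yb]|_]; case: eqP => [[xb ya]|_] //=; exfalso.
by move: yx_nz; rewrite subr_eq0 -(inj_eq (addIr g)) yb xb eqxx.
Qed.

Lemma translates_edge_count c a b : 0 \notin cyc_diff c ->
  (\sum_(g : 'Z_N) cyc_edge_count [seq (x + g)%R | x <- c] a b)%N
    = (count_mem (b - a)%R (cyc_diff c) + count_mem (a - b)%R (cyc_diff c))%N.
Proof.
move=> steps_nz; rewrite /cyc_edge_count.
under eq_bigr do rewrite size_map.
rewrite exchange_big /= !count_sum -big_split /= /cyc_diff big_map.
have -> : iota 0 (size c) = index_iota 0 (size c) by rewrite /index_iota subn0.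
rewrite big_mkord; apply: eq_bigr => h _.
have hs := ltn_ord h; have hs' : (h.+1 %% size c < size c)%N.
  by rewrite ltn_pmod // (leq_ltn_trans _ hs).
under eq_bigr do rewrite !(nth_map 0) //.
apply: translates_of_edge; apply: contra steps_nz => /eqP <-.
by apply/mapP; exists (nat_of_ord h); rewrite // mem_iota.
Qed.

Definition psums d : seq 'Z_N :=
  [seq \sum_(x <- take h d) x | h <- iota 1 (size d)].

Lemma size_psums d : size (psums d) = size d.
Proof. by rewrite size_map size_iota. Qed.

Lemma nth_psums d h : (h < size d)%N ->
  nth 0 (psums d) h = \sum_(x <- take h.+1 d) x.
Proof. by move=> hs; rewrite (nth_map 0%N) ?size_iota // nth_iota // add1n. Qed.

Lemma cyc_diff_psums d : \sum_(x <- d) x = 0 -> cyc_diff (psums d) = rot 1 d.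
Proof.
move=> d_sum0; apply: (@eq_from_nth _ 0); rewrite size_map size_iota size_psums.
  by rewrite size_rot.
move=> h hs.
rewrite (nth_map 0%N) ?size_iota ?size_psums // nth_iota // add0n nth_rot1 //.
case: (ltngtP h.+1 (size d)) => [hs'|hs'|hs'].
- rewrite modn_small // !nth_psums // (take_nth 0 hs') -cats1 big_cat big_seq1 /=.
  by rewrite addrAC subrr add0r.
- by move: hs'; rewrite ltnS leqNgt hs.
- have d_gt0 : (0 < size d)%N by rewrite -hs'.
  rewrite hs' modnn !nth_psums // hs' take_size d_sum0 subr0.
  by case: d d_gt0 {hs d_sum0 hs'} => [|x d] //= _; rewrite take0 big_seq1.
Qed.

End CycleDifferences.

Lemma cyclic_decomp_of_base_cycles (q r lambda l M : nat)
    (B : 'I_M -> seq 'Z_(q * r)) :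
  (forall i, size (B i) = l /\ uniq (B i)) ->
  (forall y : 'Z_(q * r),
     (\sum_i (count_mem y (cyc_diff (B i)) + count_mem (- y) (cyc_diff (B i))))%N
       = if (q %| y)%N then 0%N else lambda) ->
  cyclic_cycle_decomp q r lambda l.
Proof.
move=> B_cycles steps_cover.
have steps_nz i : 0 \notin cyc_diff (B i).
  apply/negP => zero_step; move/eqP: (steps_cover 0); rewrite oppr0 dvdn0.
  rewrite sum_nat_eq0 => /forallP/(_ i); rewrite addn_eq0 => /andP[/eqP no0 _].
  by move: zero_step; rewrite -has_pred1 has_count no0.
pose T := ('I_M * 'Z_(q * r))%type.
exists #|{: T}|, (fun k => [seq x + (enum_val k).2 | x <- B (enum_val k).1]).
split.
- move=> k; have [szB uniqB] := B_cycles (enum_val k).1.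
  by rewrite size_map map_inj_uniq // => x y /addIr.
- move=> a b; rewrite -(big_enum_val (A := {: T})
    (fun p => cyc_edge_count [seq x + p.2 | x <- B p.1] a b)).
  rewrite -(pair_big xpredT xpredT
    (fun i g => cyc_edge_count [seq x + g | x <- B i] a b)) /=.
  rewrite /Kmult -steps_cover; apply: eq_bigr => i _.
  by rewrite translates_edge_count // opprB addnC.
- move=> g; pose shift (k : 'I_#|{: T}|) :=
    enum_rank ((enum_val k).1, (enum_val k).2 + g).
  have shift_inj : injective shift.
    move=> k1 k2 /(congr1 enum_val); rewrite !enum_rankK => /eqP.
    rewrite xpair_eqE => /andP[/eqP e1 /eqP/addIr e2]; apply: enum_val_inj.
    by move: e1 e2; case: (enum_val k1); case: (enum_val k2) => /= ? ? ? ? -> ->.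
  exists (perm shift_inj) => k; rewrite permE /shift enum_rankK /=.
  by exists 0%N; left; rewrite rot0 -map_comp; apply: eq_map => x /=; rewrite addrA.
Qed.

Section RowCycles.
Variables (N m n : nat) (A : 'M[option 'Z_N]_(m, n)).

Lemma big_row_ordering (R : Type) (idx : R) (op : Monoid.com_law idx)
    (i : 'I_m) (c : seq 'I_n) (F : option 'Z_N -> R) :
  perm_eq c (enum (filled_row A i)) -> F None = idx ->
  \big[op/idx]_(j <- c) F (A i j) = \big[op/idx]_j F (A i j).
Proof.
move=> c_row F_None; rewrite (perm_big _ c_row) big_enum /= big_mkcond /=.
by apply: eq_bigr => j _; rewrite inE; case: (A i j).
Qed.

Definition row_cycle (i : 'I_m) (c : seq 'I_n) : seq 'Z_N :=
  psums [seq entry (A i j) | j <- c].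

Lemma row_cycleE i c :
  row_cycle i c = [seq \sum_(j <- take h c) entry (A i j) | h <- iota 1 (size c)].
Proof.
by rewrite /row_cycle /psums size_map; apply: eq_map => h; rewrite -map_take big_map.
Qed.

Lemma row_cycle_simple i c : simple_row_ordering A i c ->
  size (row_cycle i c) = #|filled_row A i| /\ uniq (row_cycle i c).
Proof.
case/andP=> c_row sums_uniq; rewrite row_cycleE; split => //.
by rewrite size_map size_iota (perm_size c_row) cardE.
Qed.

(* If row i sums to 0, the steps of its cycle are its entries: the value y
   occurs among them as often as in the row. *)
Lemma row_cycle_step_count i c y : simple_row_ordering A i c ->
  \sum_j entry (A i j) = 0 ->
  count_mem y (cyc_diff (row_cycle i c)) = (\sum_j (A i j == Some y))%N.
Proof.
case/andP=> c_row _ row_sum0; rewrite cyc_diff_psums; last first.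
  by rewrite big_map (@big_row_ordering _ _ _ i c (@entry N) c_row).
set d := [seq entry (A i j) | j <- c].
have /seq.permP -> : perm_eq (rot 1 d) d by rewrite perm_rot.
rewrite count_map count_sum.
rewrite -(@big_row_ordering _ _ _ i c (fun o => (o == Some y) : nat) c_row) //.
by apply: eq_big_seq => j; rewrite (perm_mem c_row) mem_enum inE /=; case: (A i j).
Qed.

End RowCycles.

Lemma row_cycle_decomposition (q r lambda s m n N : nat)
    (A : 'M[option 'Z_N]_(m, n)) :
  (0 < r)%N -> N = (q * r)%N ->
  (forall i, #|filled_row A i| = s) ->
  (forall y : 'Z_N,
     (\sum_(i < m) \sum_(j < n) ((A i j == Some y) + (A i j == Some (- y))))%N
       = (if y \in Jsub N r then 0 else lambda)%N) ->
  (forall i, \sum_(j < n) entry (A i j) = 0) ->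
  (forall i, exists c, simple_row_ordering A i c) ->
  cyclic_cycle_decomp q r lambda s.
Proof.
move=> r_gt0 N_qr; subst N => rows_s cover rows_sum0 rows_simple.
pose c i := xchoose (rows_simple i).
have c_simple i : simple_row_ordering A i (c i) := xchooseP (rows_simple i).
apply: (@cyclic_decomp_of_base_cycles _ _ _ _ _ (fun i => row_cycle A i (c i))).
  by move=> i; rewrite -(rows_s i); exact: row_cycle_simple.
move=> y; move: (cover y); rewrite inE mulnK // => <-; apply: eq_bigr => i _.
by rewrite !row_cycle_step_count // big_split.
Qed.

Section RowsAndColumns.
Variables (N m n : nat) (A : 'M[option 'Z_N]_(m, n)).

Lemma filled_row_tr j : filled_row A^T j = filled_col A j.
Proof. by apply/setP => i; rewrite !inE mxE. Qed.

Lemma simple_row_ordering_tr j c :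
  simple_row_ordering A^T j c = simple_col_ordering A j c.
Proof.
rewrite /simple_row_ordering /simple_col_ordering filled_row_tr; congr (_ && uniq _).
by apply: eq_map => h; apply: eq_bigr => i _; rewrite mxE.
Qed.

Lemma filled_cells_double_count :
  (\sum_i #|filled_row A i| = \sum_j #|filled_col A j|)%N.
Proof.
transitivity (\sum_i \sum_j ((A i j != None) : nat))%N.
  apply: eq_bigr => i _.
  by rewrite -sum1_card big_mkcond; apply: eq_bigr => j _; rewrite inE.
rewrite exchange_big; apply: eq_bigr => j _.
by rewrite -sum1_card [RHS]big_mkcond; apply: eq_bigr => i _; rewrite inE.
Qed.

End RowsAndColumns.

Lemma col_cycle_decomposition (q r lambda k m n N : nat)
    (A : 'M[option 'Z_N]_(m, n)) :
  (0 < r)%N -> N = (q * r)%N ->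
  (forall j, #|filled_col A j| = k) ->
  (forall y : 'Z_N,
     (\sum_(i < m) \sum_(j < n) ((A i j == Some y) + (A i j == Some (- y))))%N
       = (if y \in Jsub N r then 0 else lambda)%N) ->
  (forall j, \sum_(i < m) entry (A i j) = 0) ->
  (forall j, exists c, simple_col_ordering A j c) ->
  cyclic_cycle_decomp q r lambda k.
Proof.
move=> r_gt0 N_qr cols_k cover cols_sum0 cols_simple.
apply: (row_cycle_decomposition (A := A^T) r_gt0 N_qr).
- by move=> j; rewrite filled_row_tr.
- move=> y; rewrite exchange_big -cover.
  by apply: eq_bigr => j _; apply: eq_bigr => i _; rewrite mxE.
- by move=> j; rewrite -[RHS](cols_sum0 j); apply: eq_bigr => i _; rewrite mxE.
- move=> j; have [c c_simple] := cols_simple j.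
  by exists c; rewrite simple_row_ordering_tr.
Qed.

Local Close Scope ring_scope.

Lemma Hv_factor (n k lambda t : nat) : t %| (2 * n * k) %/ lambda ->
  Hv n k lambda t = ((2 * n * k) %/ (lambda * t) + 1) * t.
Proof. by move=> t_dvd; rewrite /Hv divnMA mulnDl divnK // mul1n. Qed.

Theorem proposition3 (m n s k lambda t : nat)
    (A : 'M[option 'Z_(Hv n k lambda t)]_(m, n)) :
  0 < m -> 0 < n -> 0 < s -> 0 < k -> 0 < lambda -> 0 < t ->
  lambda %| 2 * n * k -> t %| (2 * n * k) %/ lambda ->
  is_H m n s k lambda t A -> is_simple A ->
  cyclic_cycle_decomp ((2 * m * s) %/ (lambda * t) + 1) t lambda s /\
  cyclic_cycle_decomp ((2 * n * k) %/ (lambda * t) + 1) t lambda k.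
Proof.
move=> _ _ _ _ _ t_gt0 _ t_dvd [rows_s cols_k cover rows_sum0 cols_sum0].
move=> [rows_simple cols_simple].
have ms_nk : m * s = n * k.
  have row_count : \sum_(i < m) #|filled_row A i| = m * s.
    by under eq_bigr do rewrite rows_s; rewrite sum_nat_const card_ord.
  have col_count : \sum_(j < n) #|filled_col A j| = n * k.
    by under eq_bigr do rewrite cols_k; rewrite sum_nat_const card_ord.
  by rewrite -row_count -col_count filled_cells_double_count.
split.
- apply: (row_cycle_decomposition t_gt0 _ rows_s cover rows_sum0 rows_simple).
  by rewrite -mulnA ms_nk mulnA Hv_factor.
- exact: (col_cycle_decomposition t_gt0 (Hv_factor t_dvd) cols_k cover cols_sum0
                                   cols_simple).
Qed.
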